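(* Assume $p$ is odd and $\ell\ge2$. An irreducible representation of ${\rm GL}_2(\mathfrak o_\ell)$ admits a $\theta$-Whittaker model for a (equivalently, any) non-degenerate character $\theta$ of $\mathbf U(\mathfrak o_\ell)$ if and only if it is primitive.
   Context: $\mathfrak o$: ring of integers of a non-archimedean local field, uniformizer $\varpi$, residue field $\mathbb F_q$ of characteristic $p$; $\mathfrak o_r=\mathfrak o/\varpi^r\mathfrak o$. $\mathbf U(\mathfrak o_\ell)=\{\begin{pmatrix}1&u\\0&1\end{pmatrix}\}$; a non-degenerate character is $\theta\begin{pmatrix}1&u\\0&1\end{pmatrix}=\varphi_1(u)$ with $\varphi_1$ a character of $(\mathfrak o_\ell,+)$ nontrivial on $\varpi^{\ell-1}\mathfrak o_\ell$. $\pi$ admits a $\theta$-Whittaker model if $\mathrm{Hom}(\pi,\mathrm{Ind}_{\mathbf U(\mathfrak o_\ell)}^{{\rm GL}_2(\mathfrak o_\ell)}\theta)\ne0$. Let $K_\ell^{\ell-1}=\ker({\rm GL}_2(\mathfrak o_\ell)\to{\rm GL}_2(\mathfrak o_{\ell-1}))=\{I+\varpi^{\ell-1}y\}$; fixing a primitive $\varphi$, each $x\in M_2(\mathbb F_q)$ gives a character $\varphi_x(I+\varpi^{\ell-1}y)=\varphi(\varpi^{\ell-1}\mathrm{tr}(\hat xy))$. An irreducible representation $\rho$ is primitive if the orbit of characters occurring in $\rho|_{K_\ell^{\ell-1}}$ contains no $\varphi_x$ with $x$ a scalar matrix. *)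

From HB Require Import structures.
From mathcomp Require Import all_boot all_order all_algebra all_fingroup all_solvable all_field all_character.
Set Implicit Arguments. Unset Strict Implicit. Unset Printing Implicit Defensive.
Import GRing.Theory Num.Theory.
Local Open Scope ring_scope.

(* o_l is modelled by a finite commutative ring R with an element w (the image
   of the uniformizer) such that R is local with maximal ideal wR,
   w^l = 0, w^(l-1) <> 0, and the residue field R/wR has characteristic p. *)

Definition in_ideal (R : comPzRingType) (a x : R) : Prop := exists y, x = a * y.

Definition is_trunc_dvr (R : finComUnitRingType) (w : R) (l p : nat) : Prop :=
  [/\ (forall x : R, x \is a GRing.unit \/ in_ideal w x),
      w ^+ l = 0, w ^+ l.-1 != 0 & in_ideal w (p%:R : R)].

Definition add_char (R : finComUnitRingType) (phi : R -> algC) : Prop :=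
  phi 0 = 1 /\ forall a b, phi (a + b) = phi a * phi b.

Definition primitive_add_char (R : finComUnitRingType) (w : R) (l : nat)
    (phi : R -> algC) : Prop :=
  add_char phi /\ exists u, in_ideal (w ^+ l.-1) u /\ phi u != 1.

Definition nmat (R : finComUnitRingType) (u : R) : 'M[R]_2 :=
  \matrix_(i < 2, j < 2)
     (if i == j then 1 else if (i == 0) && (j == 1) then u else 0).

Definition Uset (R : finComUnitRingType) : {set {'GL_2[R]}} :=
  [set g : {'GL_2[R]} | [exists u : R, GLval g == nmat u]].
Definition Ugrp (R : finComUnitRingType) := (<< Uset R >>)%G.

Definition Kset (R : finComUnitRingType) (w : R) (l : nat) : {set {'GL_2[R]}} :=
  [set g : {'GL_2[R]} | [exists y : 'M[R]_2, GLval g == 1 + (w ^+ l.-1) *: y]].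
(* K_l^{l-1} = ker(GL_2(o_l) -> GL_2(o_{l-1})) = { I + w^(l-1) y } *)
Definition Kgrp (R : finComUnitRingType) (w : R) (l : nat) := (<< Kset w l >>)%G.

Definition nondeg_char (R : finComUnitRingType) (w : R) (l : nat)
    (theta : 'CF(Ugrp R)) : Prop :=
  exists phi1 : R -> algC, primitive_add_char w l phi1 /\
    forall (g : {'GL_2[R]}) (u : R), g \in Ugrp R -> GLval g = nmat u ->
      theta g = phi1 u.

Definition has_whittaker (R : finComUnitRingType) (theta : 'CF(Ugrp R))
    (i : Iirr 'GL_2[R]) : Prop :=
  '[ 'chi_i, 'Ind['GL_2[R]] theta ] != 0.

(* psi is a character phi_x of K_l^{l-1} with x a scalar matrix in M_2(F_q):
   phi_x(I + w^(l-1) y) = phi(w^(l-1) tr(xhat y)) with xhat = a I, a in o_l *)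
Definition scalar_type (R : finComUnitRingType) (w : R) (l : nat)
    (phi : R -> algC) (psi : 'CF(Kgrp w l)) : Prop :=
  exists a : R, forall (g : {'GL_2[R]}) (y : 'M[R]_2), g \in Kgrp w l ->
    GLval g = 1 + (w ^+ l.-1) *: y ->
    psi g = phi (w ^+ l.-1 * \tr ((a%:M : 'M[R]_2) *m y)).

Definition primitive_irr (R : finComUnitRingType) (w : R) (l : nat)
    (phi : R -> algC) (i : Iirr 'GL_2[R]) : Prop :=
  forall j : Iirr (Kgrp w l), j \in irr_constt ('Res[Kgrp w l] 'chi_i) ->
    ~ scalar_type phi 'chi_j.

From Pilot Require Import Defs.
From HB Require Import structures.
From mathcomp Require Import all_boot all_order all_algebra all_fingroup all_solvable all_field all_character.
From mathcomp Require Import ring.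
Set Implicit Arguments. Unset Strict Implicit. Unset Printing Implicit Defensive.
Import GRing.Theory Num.Theory.
Local Open Scope ring_scope.

(* Write N = w^(l-1), so that K = 1 + N M_2(R) is abelian and n(N b) lies in
   K.  Both conditions of the theorem are equivalent to: the matrices n(N b)
   are not all in the kernel of chi = 'chi_i.

   Whittaker side: by Frobenius reciprocity the multiplicity of chi in
   Ind theta is the Fourier coefficient of u |-> chi(n(u)) at phi1.
   Conjugation by diag(t, 1) shows that all coefficients at phi1(t .), t a
   unit, vanish together; the remaining coefficients only see u modulo the
   socle N R, so Fourier inversion makes chi constant on n(N R).  Conversely,
   if n(N R) is in the kernel, translating by a u0 in N R with phi1 u0 <> 1
   kills the coefficient.

   Primitivity side: a character of K of scalar type is invariant under
   GL_2-conjugation, so by Clifford theory it is the only constituent of the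
   restriction of chi, and it is trivial on n(N R).  Conversely, if n(N R) is
   in the kernel, so are its conjugates, and these generate the trace-zero
   part of K; hence every constituent of the restriction factors through the
   trace, and a character of R trivial on the annihilator of N has the form
   s |-> phi (N a s). *)

(* character.v also has a fact named add_char. *)
Local Notation add_char := Pilot.Defs.add_char.

Ltac mx2_ext := apply/matrixP; case => [[|[|//]] ?]; case => [[|[|//]] ?];
  rewrite !mxE ?big_ord_recl ?big_ord0 /= ?mxE /=.

Lemma mulr_fix_eq0 (R : idomainType) (x c : R) : x * c = x -> c != 1 -> x = 0.
Proof.
move=> e c1; have /eqP : x * (1 - c) = 0 by rewrite mulrBr mulr1 e subrr.
by rewrite mulf_eq0 subr_eq0 [1 == c]eq_sym (negbTE c1) orbF => /eqP.
Qed.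

Lemma mulrn_card (R : finZmodType) (x : R) : x *+ #|R| = 0.
Proof. by have := expg_cardG (in_setT x); rewrite cardsT. Qed.

Section AdditiveCharacters.

Variables (R : finComUnitRingType) (f : R -> algC).
Hypothesis hf : add_char f.

Lemma add_char0 : f 0 = 1. Proof. by case: hf. Qed.

Lemma add_charD a b : f (a + b) = f a * f b. Proof. by case: hf. Qed.

Lemma add_charNK a : f (- a) * f a = 1.
Proof. by rewrite -add_charD addNr add_char0. Qed.

Lemma add_charMn a n : f (a *+ n) = f a ^+ n.
Proof.
elim: n => [|n IHn]; first by rewrite mulr0n expr0 add_char0.
by rewrite mulrS add_charD IHn exprS.
Qed.

Lemma add_char_conj a : (f a)^* = f (- a).
Proof.
have n1 : `|f a| = 1.
  apply/eqP; rewrite -(pexpr_eq1 (ltnW (card_finNzRing_gt1 R))) ?normr_ge0 // -normrX.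
  by rewrite -add_charMn mulrn_card add_char0 normr1.
have ca : (f a)^* * f a = 1 by rewrite mulrC -normCK n1 expr1n.
by rewrite -[RHS]mul1r -ca -mulrA [f a * _]mulrC add_charNK mulr1.
Qed.

Lemma add_char_sum_eq0 a : f a != 1 -> \sum_(s : R) f s = 0.
Proof.
apply: (mulr_fix_eq0 (c := f a)); rewrite mulr_suml [RHS](reindex_inj (addIr a)) /=.
by apply: eq_bigr => s _; rewrite add_charD.
Qed.

Lemma add_char_sum_neq0 : \sum_(s : R) f s != 0 -> forall s, f s = 1.
Proof. by move=> hs s; apply: contraNeq hs => /add_char_sum_eq0 ->. Qed.

End AdditiveCharacters.

Section TruncatedValuationRing.

Variables (R : finComUnitRingType) (w : R) (l p : nat).
Hypotheses (hl : (2 <= l)%N) (hR : is_trunc_dvr w l p).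
Local Notation N := (w ^+ l.-1).

Lemma mulw_top : w * N = 0.
Proof. by case: hR => _ hwl _ _; rewrite -exprS prednK // ltnW. Qed.

Lemma nonunit_mul_top c : c \isn't a GRing.unit -> c * N = 0.
Proof.
case: hR => hdv _ _ _ cU; case: (hdv c) => [cU'|[y ->]]; first by rewrite cU' in cU.
by rewrite mulrAC mulw_top mul0r.
Qed.

Lemma mul_top_top : N * N = 0.
Proof.
have e : l.-1 = l.-2.+1 by case: (l) hl => [|[|]].
by rewrite {1}e exprS -mulrA mulrCA mulw_top mulr0.
Qed.

(* Every nonzero y is w^k times a unit with k < l. *)
Lemma dvd_top y : y != 0 -> exists z, y * z = N.
Proof.
case: hR => hdv hwl _ _ y0.
have [k [e [ltkl eU ->]]] : exists k e, [/\ (k < l)%N, e \is a GRing.unit & y = w ^+ k * e].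
  have : forall n, (exists e, y = w ^+ n * e) \/
           exists k e, [/\ (k < n)%N, e \is a GRing.unit & y = w ^+ k * e].
    elim=> [|n [[e ye]|[k [e [ltkn eU ye]]]]]; first by left; exists y; rewrite mul1r.
      case: (hdv e) => [eU|[e' ee']]; first by right; exists n, e.
      by left; exists e'; rewrite ye ee' mulrA -exprSr.
    by right; exists k, e; rewrite ltnS ltnW.
  by case/(_ l) => [[e ye]|//]; rewrite ye hwl mul0r eqxx in y0.
exists (e^-1 * w ^+ (l.-1 - k)).
by rewrite mulrA -(mulrA _ e) mulrV // mulr1 -exprD subnKC // -ltnS prednK // ltnW.
Qed.

Variable phi : R -> algC.
Hypothesis hphi : primitive_add_char w l phi.

Lemma sum_add_char_mul y : \sum_(c : R) phi (c * y) = if y == 0 then #|R|%:R else 0.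
Proof.
case: hphi => hf [u [[r ->] hu]].
have [->|y0] := eqVneq y 0.
  by under eq_bigr do rewrite mulr0 (add_char0 hf); rewrite sumr_const.
have [z yz] := dvd_top y0.
apply: (@add_char_sum_eq0 _ (fun c => phi (c * y)) _ (z * r)).
  by split=> [|a b]; rewrite ?mul0r ?(add_char0 hf) // mulrDl (add_charD hf).
by rewrite mulrAC (mulrC z) yz.
Qed.

Lemma add_char_inversion (A : R -> algC) x :
  \sum_(c : R) \sum_(u : R) A u * phi (c * (x - u)) = #|R|%:R * A x.
Proof.
rewrite exchange_big /=.
under eq_bigr do rewrite -mulr_sumr sum_add_char_mul subr_eq0.
rewrite (bigD1 x) //= eqxx big1 ?addr0 => [|u ux]; first by rewrite mulrC.
by rewrite eq_sym (negbTE ux) mulr0.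
Qed.

(* Some twist s |-> f s * phi (- N a s) has a nonzero sum over R, hence is trivial. *)
Lemma add_char_top_dual (f : R -> algC) : add_char f ->
  (forall s, N * s = 0 -> f s = 1) -> exists a, forall s, f s = phi (N * (a * s)).
Proof.
move=> hf f1; have [hphiA _] := hphi.
pose g a s := f s * phi (a * - (N * s)).
have gchar a : add_char (g a).
  split=> [|s t]; first by rewrite /g mulr0 oppr0 mulr0 (add_char0 hf) (add_char0 hphiA) mulr1.
  by rewrite /g mulrDr opprD mulrDr (add_charD hf) (add_charD hphiA) mulrACA.
have hsum : \sum_(a : R) \sum_(s : R) g a s != 0.
  rewrite exchange_big /=.
  under eq_bigr do rewrite -mulr_sumr sum_add_char_mul oppr_eq0.
  rewrite psumr_neq0 => [|s _]; last by case: eqP => [/f1 ->|_]; rewrite ?mul1r ?mulr0.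
  apply/hasP; exists 0; rewrite ?mem_index_enum //= mulr0 eqxx f1 ?mulr0 // mul1r.
  by rewrite ltr0n ltnW // card_finNzRing_gt1.
have [a ga] : exists a, \sum_(s : R) g a s != 0.
  apply/existsP; move: hsum; apply: contraNT => /existsPn g0.
  by apply/eqP/big1 => a _; apply/eqP/negbNE/g0.
exists a => s; have gs1 : f s * phi (a * - (N * s)) = 1 := add_char_sum_neq0 (gchar a) ga s.
rewrite -[f s]mulr1 -(add_charNK hphiA (N * (a * s))) mulrA.
have -> : - (N * (a * s)) = a * - (N * s) by ring.
by rewrite gs1 mul1r.
Qed.

End TruncatedValuationRing.

Section GL2Matrices.

Variable R : finComUnitRingType.

(* The identity when M is singular. *)
Definition GLof (M : 'M[R]_2) : {'GL_2[R]} := odflt (1%g : {'GL_2[R]}) (insub M).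

Lemma GLofE M : M \in unitmx -> GLval (GLof M) = M.
Proof. by move=> hM; rewrite /GLof insubT. Qed.

Lemma GLval_inj : injective (@GLval 2 R).
Proof. exact: val_inj. Qed.

Lemma conj_GL_mx (g a b : {'GL_2[R]}) :
  GLval g *m GLval a = GLval b *m GLval g -> a = (b ^ g)%g.
Proof.
move=> e; have gab : (g * a = b * g)%g by apply: GLval_inj; rewrite !GL_MxE.
by rewrite conjgE -gab mulKg.
Qed.

Lemma cfun_conj_mx (chi : 'CF('GL_2[R])) (g a b : {'GL_2[R]}) :
  GLval g *m GLval a = GLval b *m GLval g -> chi a = chi b.
Proof. by move/conj_GL_mx ->; rewrite cfunJ ?inE. Qed.

Lemma cfker_conj_mx (chi : 'CF('GL_2[R])) (g a b : {'GL_2[R]}) :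
  GLval g *m GLval a = GLval b *m GLval g -> (a \in cfker chi) = (b \in cfker chi).
Proof.
by move/conj_GL_mx ->; rewrite memJ_norm // (subsetP (normal_norm (cfker_normal chi))) ?inE.
Qed.

Lemma nmatM (u v : R) : nmat u *m nmat v = nmat (u + v).
Proof. rewrite /nmat; mx2_ext; ring. Qed.

Lemma nmat0 : nmat (0 : R) = 1%:M.
Proof. rewrite /nmat; mx2_ext; ring. Qed.

Lemma nmat_unit (u : R) : nmat u \in unitmx.
Proof. by case: (@mulmx1_unit _ _ (nmat u) (nmat (- u))); rewrite // nmatM subrr nmat0. Qed.

Lemma nmat_inj : injective (@nmat R).
Proof. by move=> u v /matrixP /(_ 0 1); rewrite !mxE. Qed.

Definition nGL (u : R) : {'GL_2[R]} := GLof (nmat u).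

Lemma nGLE u : GLval (nGL u) = nmat u.
Proof. exact/GLofE/nmat_unit. Qed.

Lemma nGLM u v : (nGL u * nGL v)%g = nGL (u + v).
Proof. by apply: GLval_inj; rewrite GL_MxE !nGLE nmatM. Qed.

Lemma nGL0 : nGL 0 = 1%g.
Proof. by apply: GLval_inj; rewrite nGLE nmat0. Qed.

Lemma nGL_inj : injective nGL.
Proof. by move=> u v /(congr1 GLval); rewrite !nGLE => /nmat_inj. Qed.

Lemma Ugrp_im : (Ugrp R : {set _}) = [set nGL u | u : R].
Proof.
have Ugroup : group_set (Uset R).
  apply/group_setP; split; first by rewrite inE; apply/existsP; exists 0; rewrite nmat0.
  move=> x y; rewrite !inE => /existsP[u /eqP xu] /existsP[v /eqP yv].
  by apply/existsP; exists (u + v); rewrite GL_MxE xu yv nmatM.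
apply/setP=> g; rewrite /Ugrp /= gen_set_id // inE.
apply/existsP/imsetP => [[u /eqP gu]|[u _ ->]]; last by exists u; rewrite nGLE.
by exists u => //; apply: GLval_inj; rewrite nGLE.
Qed.

Lemma nGL_U u : nGL u \in Ugrp R.
Proof. by rewrite Ugrp_im imset_f. Qed.

Lemma sum_Ugrp (F : {'GL_2[R]} -> algC) :
  \sum_(g in Ugrp R) F g = \sum_(u : R) F (nGL u).
Proof. by rewrite Ugrp_im big_imset //= => u v _ _ /nGL_inj. Qed.

Lemma card_Ugrp : #|Ugrp R| = #|R|.
Proof. by rewrite Ugrp_im card_imset //; apply: nGL_inj. Qed.

Lemma cfdot_Ind_nondeg (phi1 : R -> algC) (theta : 'CF(Ugrp R)) (chi : 'CF('GL_2[R])) :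
  add_char phi1 ->
  (forall g u, g \in Ugrp R -> GLval g = nmat u -> theta g = phi1 u) ->
  '[chi, 'Ind['GL_2[R]] theta] = #|R|%:R^-1 * \sum_(u : R) chi (nGL u) * phi1 (- u).
Proof.
move=> hf htheta; rewrite cfdotC -Frobenius_reciprocity cfdotC conjCK cfdotE.
rewrite card_Ugrp sum_Ugrp; congr (_ * _); apply: eq_bigr => u _.
by rewrite cfResE ?subsetT ?nGL_U // (htheta _ u) ?nGL_U ?nGLE // add_char_conj.
Qed.

Definition diag1_mx (t : R) : 'M[R]_2 :=
  \matrix_(i < 2, j < 2) (if i == j then (if i == 0 then t else 1) else 0).

Lemma cfun_nGL_unitZ (chi : 'CF('GL_2[R])) t u :
  t \is a GRing.unit -> chi (nGL (t * u)) = chi (nGL u).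
Proof.
move=> tU; have dU : diag1_mx t \in unitmx.
  by case: (@mulmx1_unit _ _ (diag1_mx t) (diag1_mx t^-1)) => //;
    rewrite /diag1_mx; mx2_ext; rewrite ?mulrV //; ring.
symmetry; apply: (cfun_conj_mx _ (g := GLof (diag1_mx t))).
by rewrite !nGLE GLofE // /diag1_mx /nmat; mx2_ext; ring.
Qed.

Definition swap2_mx : 'M[R]_2 := \matrix_(i < 2, j < 2) (if i == j then 0 else 1).

Lemma swap2_mx_unit : swap2_mx \in unitmx.
Proof. by case: (@mulmx1_unit _ _ swap2_mx swap2_mx) => //; rewrite /swap2_mx; mx2_ext; ring. Qed.

Definition low1_mx : 'M[R]_2 := 1%:M + delta_mx 1 0.

Lemma low1_mx_unit : low1_mx \in unitmx.
Proof.
by case: (@mulmx1_unit _ _ low1_mx (1%:M - delta_mx 1 0)) => //; rewrite /low1_mx; mx2_ext; ring.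
Qed.

(* The conjugate of delta_mx 0 1 by low1_mx. *)
Definition qmx : 'M[R]_2 := \matrix_(i < 2, j < 2) (if j == 0 then -1 else 1).

Lemma ord2P (i : 'I_2) : i = 0 \/ i = 1.
Proof. by case: i => [[|[|//]] ?]; [left|right]; apply: val_inj. Qed.

Lemma mxtrace2 (y : 'M[R]_2) : \tr y = y 0 0 + y 1 1.
Proof. by rewrite /mxtrace big_ord_recl big_ord1; congr (y _ _ + y _ _); apply: val_inj. Qed.

Lemma trace0_decomp (y : 'M[R]_2) : \tr y = 0 ->
  y = y 0 1 *: delta_mx 0 1 + y 1 0 *: delta_mx 1 0 + (- y 0 0) *: qmx
      + y 0 0 *: delta_mx 0 1 + (- y 0 0) *: delta_mx 1 0.
Proof.
rewrite mxtrace2 => /eqP; rewrite addr_eq0 => /eqP y11.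
apply/matrixP => i j; rewrite /qmx !mxE.
by case: (ord2P i) => ->; case: (ord2P j) => ->; rewrite /= ?y11; ring.
Qed.

Section SquareZero.

Variable N : R.
Hypothesis hN : N * N = 0.

Lemma mul_kmx (y z : 'M[R]_2) : (1%:M + N *: y) *m (1%:M + N *: z) = 1%:M + N *: (y + z).
Proof.
rewrite mulmxDl !mulmxDr !mul1mx mulmx1 -scalemxAl -scalemxAr scalerA hN scale0r.
by rewrite addr0 scalerDr (addrC (N *: y)) addrA.
Qed.

Lemma kmx_unit (y : 'M[R]_2) : 1%:M + N *: y \in unitmx.
Proof.
case: (@mulmx1_unit _ _ (1%:M + N *: y) (1%:M + N *: - y)) => //.
by rewrite mul_kmx subrr scaler0 addr0.
Qed.

Definition kGL (y : 'M[R]_2) : {'GL_2[R]} := GLof (1%:M + N *: y).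

Lemma kGLE y : GLval (kGL y) = 1%:M + N *: y.
Proof. exact/GLofE/kmx_unit. Qed.

Lemma kGLM y z : (kGL y * kGL z)%g = kGL (y + z).
Proof. by apply: GLval_inj; rewrite GL_MxE !kGLE mul_kmx. Qed.

Lemma kGL0 : kGL 0 = 1%g.
Proof. by apply: GLval_inj; rewrite kGLE scaler0 addr0. Qed.

Lemma kGL_conj y g : (kGL y ^ g)%g = kGL (invmx (GLval g) *m y *m GLval g).
Proof.
apply: GLval_inj; rewrite conjgE !GL_MxE GL_VxE !kGLE mulmxDl mul1mx mulmxDr.
by rewrite mulVmx ?GL_unitmx // -scalemxAl -scalemxAr mulmxA.
Qed.

Lemma nGL_kGL b : nGL (N * b) = kGL (b *: delta_mx 0 1).
Proof. by apply: GLval_inj; rewrite nGLE kGLE /nmat; mx2_ext; ring. Qed.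

(* n(N R) generates the trace-zero part of 1 + N M_2(R) up to conjugation. *)
Lemma trace0_kGL_cfker (chi : 'CF('GL_2[R])) :
  (forall b, nGL (N * b) \in cfker chi) ->
  forall y, \tr y = 0 -> kGL y \in cfker chi.
Proof.
move=> ker_n; have ker01 b : kGL (b *: delta_mx 0 1) \in cfker chi by rewrite -nGL_kGL.
have ker10 b : kGL (b *: delta_mx 1 0) \in cfker chi.
  rewrite -(cfker_conj_mx _ (g := GLof swap2_mx) (a := kGL (b *: delta_mx 0 1))) //.
  by rewrite !kGLE GLofE ?swap2_mx_unit // /swap2_mx; mx2_ext; ring.
have kerq b : kGL (b *: qmx) \in cfker chi.
  rewrite -(cfker_conj_mx _ (g := GLof low1_mx) (a := kGL (b *: delta_mx 0 1))) //.
  by rewrite !kGLE GLofE ?low1_mx_unit // /low1_mx /qmx; mx2_ext; ring.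
move=> y /trace0_decomp ->; rewrite -!kGLM.
by do 4![rewrite groupM //]; rewrite ?ker01 ?ker10 ?kerq.
Qed.

End SquareZero.

End GL2Matrices.

Section Whittaker.

Variables (R : finComUnitRingType) (w : R) (l p : nat).
Hypotheses (hl : (2 <= l)%N) (hR : is_trunc_dvr w l p).
Local Notation N := (w ^+ l.-1).
Local Notation hN := (mul_top_top hl hR).

Lemma Kgrp_mem (g : {'GL_2[R]}) :
  (g \in Kgrp w l) = [exists y, GLval g == 1%:M + N *: y].
Proof.
have Kgroup : group_set (Kset w l).
  apply/group_setP; split; first by rewrite inE; apply/existsP; exists 0; rewrite scaler0 addr0.
  move=> x z; rewrite !inE => /existsP[u /eqP xu] /existsP[v /eqP zv].
  by apply/existsP; exists (u + v); rewrite GL_MxE xu zv (mul_kmx hN).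
by rewrite /Kgrp /= gen_set_id // inE.
Qed.

Lemma kGL_K y : kGL N y \in Kgrp w l.
Proof. by rewrite Kgrp_mem; apply/existsP; exists y; rewrite (kGLE hN). Qed.

Lemma Kgrp_kGL g : g \in Kgrp w l -> exists y, g = kGL N y.
Proof.
by rewrite Kgrp_mem => /existsP[y /eqP gy]; exists y; apply: GLval_inj; rewrite (kGLE hN).
Qed.

Lemma Kgrp_abelian : abelian (Kgrp w l).
Proof.
apply/centsP => _ /Kgrp_kGL[y ->] _ /Kgrp_kGL[z ->].
by rewrite /commute !(kGLM hN) addrC.
Qed.

Lemma Kgrp_normal : (Kgrp w l <| 'GL_2[R])%g.
Proof.
apply/andP; split; first exact: subsetT.
apply/subsetP => g _; rewrite inE; apply/subsetP => _ /imsetP[_ /Kgrp_kGL[y ->] ->].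
by rewrite (kGL_conj hN) kGL_K.
Qed.

Lemma scalar_type_invariant phi (psi : 'CF(Kgrp w l)) :
  scalar_type phi psi -> ('GL_2[R] \subset 'I[psi])%g.
Proof.
case=> a psiE; have nK := normal_norm Kgrp_normal.
apply/subsetP => g _; rewrite inE (subsetP nK) ?inE //=.
apply/eqP/cfun_inP => _ /Kgrp_kGL[y ->].
rewrite cfConjgE ?(subsetP nK) ?inE // (kGL_conj hN).
rewrite !(psiE _ _ (kGL_K _) (kGLE hN _)).
rewrite !mul_scalar_mx !mxtraceZ mxtrace_mulC mulmxA mulmxV ?mul1mx //.
exact: (@GL_unitmx 2 R g^-1).
Qed.

Lemma scalar_constt_top_cfker phi i j :
  j \in irr_constt ('Res[Kgrp w l] 'chi[ 'GL_2[R]]_i) -> scalar_type phi 'chi_j ->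
  forall b, nGL (N * b) \in cfker 'chi_i.
Proof.
move=> hj hs b; have [a chijE] := hs.
have := Clifford_Res_sum_cfclass Kgrp_normal hj.
rewrite cfclass_invariant ?(scalar_type_invariant hs) // big_seq1 => ResE.
have chij y : 'chi_j (kGL N y) = phi (N * \tr (a%:M *m y)).
  exact: chijE (kGL_K y) (kGLE hN y).
rewrite cfkerEchar ?irr_char // !inE /= (nGL_kGL hN).
rewrite -!(cfResE _ (subsetT (Kgrp w l))) ?kGL_K ?group1 // ResE !cfunE.
rewrite -(kGL0 hN) !chij mulmx0 mxtrace0 mul_scalar_mx mxtraceZ mxtraceZ.
by rewrite mxtrace2 !mxE /= addr0 !mulr0.
Qed.

Lemma top_cfker_cfdot_Ind (theta : 'CF(Ugrp R)) (chi : 'CF('GL_2[R])) :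
  nondeg_char w l theta -> (forall b, nGL (N * b) \in cfker chi) ->
  '[chi, 'Ind['GL_2[R]] theta] = 0.
Proof.
case=> phi1 [[hf [_ [[r ->] phi1r]]] thetaE] ker_n.
rewrite (cfdot_Ind_nondeg _ hf thetaE); apply/eqP; rewrite mulf_eq0; apply/orP; right.
apply/eqP/(mulr_fix_eq0 (c := phi1 (- (N * r)))).
  rewrite mulr_suml [RHS](reindex_inj (addIr (N * r))) /=; apply: eq_bigr => u _.
  by rewrite -nGLM cfkerMr // opprD (add_charD hf) mulrA.
apply: contra phi1r => /eqP phi1N.
by rewrite -[phi1 _]mul1r -{1}phi1N (add_charNK hf).
Qed.

Lemma cfdot_Ind_top_cfker (theta : 'CF(Ugrp R)) i :
  nondeg_char w l theta -> '[ 'chi_i, 'Ind['GL_2[R]] theta] = 0 ->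
  forall b, nGL (N * b) \in cfker 'chi[ 'GL_2[R]]_i.
Proof.
case=> phi1 [hphi1 thetaE]; have [hf _] := hphi1.
rewrite (cfdot_Ind_nondeg _ hf thetaE) => /eqP; rewrite mulf_eq0 invr_eq0 pnatr_eq0.
have R_gt0 : (0 < #|R|)%N by rewrite ltnW // card_finNzRing_gt1.
rewrite eqn0Ngt R_gt0 /= => /eqP S0 b; pose A u := 'chi_i (nGL u).
have cA c x : \sum_(u : R) A u * phi1 (c * (x - u)) =
              phi1 (c * x) * \sum_(u : R) A u * phi1 (- (c * u)).
  rewrite mulr_sumr; apply: eq_bigr => u _.
  by rewrite mulrBr (add_charD hf) mulrCA.
have cA0 c : \sum_(u : R) A u * phi1 (c * (N * b - u)) = \sum_(u : R) A u * phi1 (c * (0 - u)).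
  have [cU|cNU] := boolP (c \is a GRing.unit); last first.
    by apply: eq_bigr => u _; rewrite mulrBr mulrA (nonunit_mul_top hl hR cNU) mul0r mulrBr mulr0.
  rewrite !cA; suff -> : \sum_(u : R) A u * phi1 (- (c * u)) = 0 by rewrite !mulr0.
  rewrite -[RHS]S0 [RHS](reindex_inj (mulrI cU)) /=.
  by apply: eq_bigr => u _; rewrite /A cfun_nGL_unitZ.
have := add_char_inversion hl hR hphi1 A (N * b); under eq_bigr do rewrite cA0.
have R_neq0 : #|R|%:R != 0 :> algC by rewrite pnatr_eq0 -lt0n.
rewrite (add_char_inversion hl hR hphi1) => /(mulfI R_neq0) A_eq.
by rewrite cfkerEchar ?irr_char // !inE /= -/(A _) -A_eq /A (nGL0 R).
Qed.

Variable phi : R -> algC.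
Hypothesis hphi : primitive_add_char w l phi.

Lemma trace_factor_scalar_type (j : Iirr (Kgrp w l)) :
  (forall y, \tr y = 0 -> kGL N y \in cfker 'chi_j) -> scalar_type phi 'chi_j.
Proof.
move=> ker0; have lin : 'chi_j \is a linear_char by apply/char_abelianP/Kgrp_abelian.
pose f s := 'chi_j (kGL N (s *: delta_mx 1 1)).
have fchar : add_char f.
  split=> [|s t]; first by rewrite /f scale0r (kGL0 hN) lin_char1.
  by rewrite /f scalerDl -(kGLM hN) lin_charM ?kGL_K.
have [a fE] : exists a, forall s, f s = phi (N * (a * s)).
  apply: (add_char_top_dual hl hR hphi fchar) => s Ns0; rewrite /f.
  have -> : kGL N (s *: delta_mx 1 1) = 1%g.
    by apply: GLval_inj; rewrite (kGLE hN) scalerA Ns0 scale0r addr0.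
  exact: lin_char1.
exists a => g y _ gy; have -> : g = kGL N y by apply: GLval_inj; rewrite (kGLE hN).
have /eqP trE : \tr (y - \tr y *: delta_mx 1 1) == 0.
  by rewrite raddfB /= mxtraceZ [\tr (delta_mx _ _)]mxtrace2 !mxE /= add0r mulr1 subrr.
rewrite -[y in kGL N y](subrK (\tr y *: delta_mx 1 1)) -(kGLM hN) //.
by rewrite cfkerMl ?ker0 // -/(f _) fE mul_scalar_mx mxtraceZ.
Qed.

Lemma top_cfker_scalar_constt i :
  (forall b, nGL (N * b) \in cfker 'chi[ 'GL_2[R]]_i) ->
  forall j, j \in irr_constt ('Res[Kgrp w l] 'chi_i) -> scalar_type phi 'chi_j.
Proof.
move=> ker_n j hj; apply: trace_factor_scalar_type => y tr0.
have ker_ij : (Kgrp w l :&: cfker 'chi_i \subset cfker 'chi_j)%g.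
  rewrite -(cfker_Res (subsetT _) (irr_char i)).
  by apply: cfker_constt => //; apply/cfRes_char/irr_char.
by apply: (subsetP ker_ij); rewrite inE kGL_K (trace0_kGL_cfker hN ker_n tr0).
Qed.

End Whittaker.

Theorem theorem5p2 (R : finComUnitRingType) (w : R) (l p : nat)
    (hp : prime p) (hpodd : odd p) (hl : (2 <= l)%N)
    (hR : is_trunc_dvr w l p)
    (phi : R -> algC) (hphi : primitive_add_char w l phi)
    (theta : 'CF(Ugrp R)) (htheta : nondeg_char w l theta)
    (i : Iirr 'GL_2[R]) :
  has_whittaker theta i <-> primitive_irr w l phi i.
Proof.
split=> [hw j hj hs | hprim].
  have ker_n := scalar_constt_top_cfker hl hR hj hs.
  by move: hw; rewrite /has_whittaker (top_cfker_cfdot_Ind htheta ker_n) eqxx.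
apply/eqP => /(cfdot_Ind_top_cfker hl hR htheta) ker_n.
have [j hj] := neq0_has_constt (Res_irr_neq0 (Kgrp w l) i).
exact: hprim j hj (top_cfker_scalar_constt hl hR hphi ker_n hj).
Qed.
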